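(* Every almost bipartite cubic graph $G$ with surplus edges $e$ and $f$ has a perfect matching that contains both $e$ and $f$.
   Context: A cubic graph $G$ (multiple edges and loops permitted) is almost bipartite if it is bridgeless, not bipartite, and contains two edges $e$ and $f$ such that $G-\{e,f\}$ is bipartite; such edges $e,f$ are called surplus edges of $G$. *)

(* A finite multigraph (multiple edges and loops allowed) is
   given by a finite vertex type V, a finite edge type E and two endpoint maps
   src tgt : E -> V (the orientation is arbitrary and irrelevant). *)
From mathcomp Require Import all_boot.
Set Implicit Arguments. Unset Strict Implicit. Unset Printing Implicit Defensive.

Section Multigraph.
Variables (V E : finType) (src tgt : E -> V).

(* degree, loops counted twice *)
Definition deg (v : V) : nat :=
  #|[set c : E | src c == v]| + #|[set c : E | tgt c == v]|.

Definition cubic : Prop := forall v : V, deg v = 3.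

Definition adj_minus (b : E) : rel V :=
  fun x y => [exists c : E, (c != b) &&
     (((src c == x) && (tgt c == y)) || ((src c == y) && (tgt c == x)))].

(* b is a bridge iff its endpoints lie in different components of G - b
   (equivalently, deleting b increases the number of components;
   a loop is never a bridge). *)
Definition is_bridge (b : E) : Prop := ~~ connect (adj_minus b) (src b) (tgt b).

Definition bridgeless : Prop := forall b : E, ~ is_bridge b.

Definition bipartite_on (S : {set E}) : Prop :=
  exists col : V -> bool, forall c : E, c \in S -> col (src c) != col (tgt c).

Definition bipartite : Prop := bipartite_on [set: E].

Definition almost_bipartite_with (e f : E) : Prop :=
  [/\ cubic, bridgeless, ~ bipartite, e != f & bipartite_on (~: [set e; f])].

Definition perfect_matching (M : {set E}) : Prop :=
  (forall c : E, c \in M -> src c != tgt c) /\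
  (forall v : V, #|[set c in M | (src c == v) || (tgt c == v)]| = 1).

End Multigraph.

(* Colour G - {e, f} properly with two colours.  Counting edge ends in each
   colour class of the cubic graph shows that, as G itself is not bipartite,
   both ends of e get one colour, both ends of f the other, and the two classes
   have the same size.  It remains to match the rest of e's class into the rest
   of f's class along edges other than e and f, and Hall's condition holds: if a
   set X there had fewer than |X| neighbours Y, then S = X u Y u ends(f) would
   contain the 3|X| edges at X as well as f, and 3|S| = 2 e(S) + |d(S)| would
   force exactly one edge to leave S: a bridge. *)

From mathcomp Require Import all_boot zify.
Set Implicit Arguments. Unset Strict Implicit. Unset Printing Implicit Defensive.

Section Hall.
Variables (T U : finType) (u0 : U).
Implicit Types (R : T -> U -> bool) (A X Z : {set T}) (B : {set U}).

Definition nbh R X : {set U} := [set y | [exists x in X, R x y]].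

Definition hall_condition R A := forall X, X \subset A -> #|X| <= #|nbh R X|.

Definition sdr R A (g : T -> U) := {in A, forall x, R x (g x)} /\ {in A &, injective g}.

Definition avoiding R B x y := R x y && (y \notin B).

Lemma nbhP R X y : reflect (exists2 x, x \in X & R x y) (y \in nbh R X).
Proof. by rewrite inE; apply: (iffP exists_inP). Qed.

Lemma nbhU R X Z : nbh R (X :|: Z) = nbh R X :|: nbh R Z.
Proof.
apply/setP => y; rewrite in_setU; apply/nbhP/orP.
  by case=> x; rewrite inE => /orP[] xXZ Rxy; [left|right]; apply/nbhP; exists x.
by case=> /nbhP[x xXZ Rxy]; exists x; rewrite // inE xXZ ?orbT.
Qed.

Lemma card_nbh_avoiding R X B :
  #|nbh R X :|: B| <= #|nbh (avoiding R B) X| + #|B|.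
Proof.
apply: leq_trans (leq_card_setU _ _); apply: subset_leq_card.
apply/subsetP => y; rewrite !in_setU => /orP[/nbhP[x xX Rxy]|->]; last by rewrite orbT.
case yB: (y \in B); rewrite ?orbT // orbF.
by apply/nbhP; exists x; rewrite // /avoiding Rxy yB.
Qed.

Lemma hall_conditionS R A X : hall_condition R A -> X \subset A -> hall_condition R X.
Proof. by move=> hA sXA Z sZX; apply/hA/(subset_trans sZX). Qed.

Lemma sdr_setU R A1 A2 g1 g2 : sdr R A1 g1 -> sdr R A2 g2 ->
    {in A1 & A2, forall x y, g1 x != g2 y} ->
  exists g, sdr R (A1 :|: A2) g.
Proof.
move=> [R1 inj1] [R2 inj2] g12.
exists (fun x => if x \in A1 then g1 x else g2 x); split.
  by move=> x; rewrite inE; case: ifP => [x1 _|_ /= x2]; [apply: R1|apply: R2].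
move=> x y; rewrite !inE; case: ifP => x1; case: ifP => y1 /= xA yA.
- exact: inj1.
- by move=> exy; have := g12 x y x1 yA; rewrite exy eqxx.
- by move=> exy; have := g12 y x y1 xA; rewrite exy eqxx.
- exact: inj2.
Qed.

Section Induction.
Variables (R : T -> U -> bool) (A : {set T}).
Hypothesis hallA : hall_condition R A.
Hypothesis IH : forall R' (A' : {set T}),
  #|A'| < #|A| -> hall_condition R' A' -> exists g, sdr R' A' g.

Lemma sdr_critical X0 : X0 \proper A -> X0 != set0 -> #|nbh R X0| <= #|X0| ->
  exists g, sdr R A g.
Proof.
move=> ltX0A nzX0 tightX0; have sX0A := proper_sub ltX0A.
have [g1 g1sdr] := IH (proper_card ltX0A) (hall_conditionS hallA sX0A).
have [g2 [g2R g2inj]] : exists g, sdr (avoiding R (nbh R X0)) (A :\: X0) g.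
  apply: IH.
    by rewrite cardsDS //; move: nzX0 (proper_card ltX0A); rewrite -card_gt0; lia.
  move=> Z; rewrite subsetD => /andP[sZA dZX0].
  have sZX0A : Z :|: X0 \subset A by rewrite subUset sZA sX0A.
  have := hallA sZX0A; rewrite nbhU.
  have := card_nbh_avoiding R Z (nbh R X0); rewrite (cardsU Z X0).
  by move: dZX0; rewrite -setI_eq0 => /eqP ->; rewrite cards0; lia.
have g2sdr : sdr R (A :\: X0) g2.
  by split=> // x /g2R /andP[].
rewrite -(setID A X0) (setIidPr sX0A); apply: (sdr_setU g1sdr g2sdr).
move=> x y xX0 yA; apply: contraTneq (g2R y yA) => <-.
rewrite /avoiding negb_and negbK; apply/orP; right.
by apply/nbhP; exists x => //; case: g1sdr => ->.
Qed.

Lemma sdr_noncritical a : a \in A ->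
    (forall X, X \proper A -> X != set0 -> #|X| < #|nbh R X|) ->
  exists g, sdr R A g.
Proof.
move=> aA loose.
have /card_gt0P[y /nbhP[_ /set1P-> Ray]] : 0 < #|nbh R [set a]|.
  by apply: leq_trans (hallA _); rewrite ?cards1 ?sub1set.
have [g1 [g1R g1inj]] : exists g, sdr (avoiding R [set y]) (A :\ a) g.
  apply: IH; first by rewrite (cardsD1 a A) aA.
  move=> X sXA; have [->|nzX] := eqVneq X set0; first by rewrite cards0.
  have aNX : a \notin X by apply/negP => /(subsetP sXA); rewrite !inE eqxx.
  have ltXA : X \proper A.
    rewrite properEneq (subset_trans sXA (subD1set _ _)) andbT.
    by apply: contraNneq aNX => ->.
  have := loose X ltXA nzX; have := card_nbh_avoiding R X [set y].
  have := subset_leq_card (subsetUl (nbh R X) [set y]); rewrite cards1; lia.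
rewrite -(setD1K aA); apply: (@sdr_setU _ _ _ (fun _ => y) g1).
- by split=> [x /set1P->|x z /set1P-> /set1P->].
- by split=> // x /g1R /andP[].
- by move=> x z _ /g1R /andP[_]; rewrite inE eq_sym.
Qed.

End Induction.

Theorem hall_marriage R A : hall_condition R A -> exists g, sdr R A g.
Proof.
have [n] := ubnP #|A|; elim: n => // n IHn in R A *; rewrite ltnS => leAn hallA.
have IH R' (A' : {set T}) : #|A'| < #|A| -> hall_condition R' A' -> exists g, sdr R' A' g.
  by move=> ltA'A; apply: IHn; apply: leq_trans leAn.
have [A0|[a aA]] := set_0Vmem A.
  by exists (fun _ => u0); split=> x; rewrite A0 inE.
case: (boolP [exists X : {set T}, [&& X \proper A, X != set0 & #|nbh R X| <= #|X|]]).
  by case/existsP=> X /and3P[]; exact: sdr_critical.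
rewrite negb_exists => /forallP loose; apply: (sdr_noncritical hallA IH aA) => X ltXA nzX.
by have := loose X; rewrite ltXA nzX -ltnNge.
Qed.

End Hall.

Section Multigraph.
Variables (V E : finType) (src tgt : E -> V).
Implicit Types (c d : E) (S W : {set V}) (M : {set E}).

Definition ends c : {set V} := [set src c; tgt c].

Definition joins c x y :=
  ((src c == x) && (tgt c == y)) || ((src c == y) && (tgt c == x)).

Definition inner_edges S := [set c | (src c \in S) && (tgt c \in S)].

Definition boundary S := [set c | (src c \in S) != (tgt c \in S)].

Definition incident_edges S := [set c | (src c \in S) || (tgt c \in S)].

Definition covers_once M W :=
  forall v, #|[set c in M | (src c == v) || (tgt c == v)]| = (v \in W).

Lemma in_inner_edges c S : (c \in inner_edges S) = (src c \in S) && (tgt c \in S).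
Proof. by rewrite inE. Qed.

Lemma in_incident_edges c S : (c \in incident_edges S) = (src c \in S) || (tgt c \in S).
Proof. by rewrite inE. Qed.

Lemma incident_ends c v : ((src c == v) || (tgt c == v)) = (v \in ends c).
Proof. by rewrite !inE !(eq_sym v). Qed.

Lemma joins_ends c x y : joins c x y -> ends c = [set x; y].
Proof. by case/orP=> /andP[/eqP<- /eqP<-]; rewrite /ends // setUC. Qed.

Lemma joins_src_tgt c : joins c (src c) (tgt c).
Proof. by rewrite /joins !eqxx. Qed.

Lemma joins_tgt_src c : joins c (tgt c) (src c).
Proof. by rewrite /joins !eqxx orbT. Qed.

Lemma card_set_sum (P : pred E) : #|[set c | P c]| = \sum_c P c.
Proof. by rewrite -sum1dep_card big_mkcond; apply: eq_bigr => c _; case: (P c). Qed.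

Lemma sum_split2 (F : E -> nat) c d : c != d ->
  \sum_i F i = F c + F d + \sum_(i | (i != c) && (i != d)) F i.
Proof.
move=> cd; rewrite (bigD1 c) // (bigD1 d) /= 1?eq_sym // addnA.
by congr (_ + _); apply: eq_bigl => i; rewrite andbC.
Qed.

Lemma covers_onceU M1 M2 W1 W2 : covers_once M1 W1 -> covers_once M2 W2 ->
  [disjoint W1 & W2] -> covers_once (M1 :|: M2) (W1 :|: W2).
Proof.
move=> cov1 cov2 W12 v; rewrite in_setU.
have -> : [set c in M1 :|: M2 | (src c == v) || (tgt c == v)] =
    [set c in M1 | (src c == v) || (tgt c == v)] :|:
    [set c in M2 | (src c == v) || (tgt c == v)].
  by apply/setP => c; rewrite !inE andb_orl.
have [vW1|vW1] := boolP (v \in W1).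
  have vW2 : (v \in W2) = false := disjointFr W12 vW1.
  by move: (cov2 v); rewrite vW2 => /cards0_eq ->; rewrite setU0 cov1 vW1.
by move: (cov1 v); rewrite (negbTE vW1) => /cards0_eq ->; rewrite set0U cov2.
Qed.

Lemma covers_once_edge c : covers_once [set c] (ends c).
Proof.
move=> v; rewrite -incident_ends.
have [inc|ninc] := boolP ((src c == v) || (tgt c == v)).
  suff -> : [set d in [set c] | (src d == v) || (tgt d == v)] = [set c] by rewrite cards1.
  by apply/setP => d; rewrite !inE; case: eqP => // ->.
suff -> : [set d in [set c] | (src d == v) || (tgt d == v)] = set0 by rewrite cards0.
by apply/setP => d; rewrite !inE; case: eqP => // ->; rewrite (negbTE ninc).
Qed.

Lemma covers_once_imset (A B : {set V}) (g : V -> V) (h : V -> E) :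
    [disjoint A & B] -> {in A &, injective g} -> g @: A = B ->
    {in A, forall x, joins (h x) x (g x)} ->
  covers_once (h @: A) (A :|: B).
Proof.
move=> AB ginj gAB hj v.
have gB x : x \in A -> g x \in B by move=> xA; rewrite -gAB imset_f.
have -> : [set c in h @: A | (src c == v) || (tgt c == v)] =
    h @: [set x in A | (v == x) || (v == g x)].
  apply/setP => c; rewrite [in LHS]inE; apply/andP/imsetP.
    case=> /imsetP[x xA ->]; rewrite incident_ends (joins_ends (hj x xA)) !inE => vx.
    by exists x; rewrite // inE xA.
  case=> x; rewrite inE => /andP[xA vx] ->; split; first exact: imset_f.
  by rewrite incident_ends (joins_ends (hj x xA)) !inE.
rewrite in_setU; have [vA|vNA] /= := boolP (v \in A).
  suff -> : [set x in A | (v == x) || (v == g x)] = [set v] by rewrite imset_set1 cards1.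
  apply/setP => x; rewrite !inE; apply/andP/eqP => [[xA /orP[/eqP//|/eqP vgx]]|->].
    by move: (disjointFr AB vA); rewrite vgx gB.
  by rewrite vA eqxx.
have [|vNB] := boolP (v \in B).
  rewrite -{1}gAB => /imsetP[x0 x0A ->].
  suff -> : [set x in A | (g x0 == x) || (g x0 == g x)] = [set x0].
    by rewrite imset_set1 cards1.
  apply/setP => x; rewrite !inE; apply/andP/eqP => [[xA /orP[/eqP gx0x|/eqP/ginj]]|->].
  - by move: (disjointFr AB xA); rewrite -gx0x gB.
  - by move=> /(_ x0A xA).
  - by rewrite x0A eqxx orbT.
suff -> : [set x in A | (v == x) || (v == g x)] = set0 by rewrite imset0 cards0.
apply/setP => x; rewrite !inE; apply/andP => -[xA /orP[/eqP vx|/eqP vgx]].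
  by rewrite vx xA in vNA.
by rewrite vgx gB in vNB.
Qed.

Lemma boundary_neq1 S : bridgeless src tgt -> #|boundary S| != 1.
Proof.
move=> br; apply/negP => /cards1P[c bS]; apply: (br c); apply/negP => conn.
have : c \in boundary S by rewrite bS set11.
have closedS : closed (adj_minus src tgt c) S.
  move=> x y /existsP[d /andP[dc xy]].
  have : d \notin boundary S by rewrite bS inE.
  by rewrite inE negbK => /eqP; case/orP: xy => /andP[/eqP-> /eqP->].
by rewrite inE (closed_connect closedS conn) eqxx.
Qed.

Section Cubic.
Hypothesis cub : cubic src tgt.

Lemma sum_ends_in S : \sum_c ((src c \in S) + (tgt c \in S)) = 3 * #|S|.
Proof.
have sum_eq x : \sum_(v in S) (x == v : nat) = (x \in S).
  rewrite big_mkcond (bigD1 x) //= eqxx big1 ?addn0 => [|v /negbTE vx].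
    by case: (x \in S).
  by rewrite eq_sym vx if_same.
rewrite [RHS]mulnC -sum_nat_const; transitivity (\sum_(v in S) deg src tgt v); last first.
  by apply: eq_bigr => v _; rewrite cub.
rewrite /deg (eq_bigr (fun v => \sum_c (src c == v : nat) + \sum_c (tgt c == v : nat)))
  => [|v _]; last by rewrite !card_set_sum.
rewrite big_split [RHS]big_split /= [in RHS]exchange_big [X in _ = _ + X]exchange_big /=.
by congr (_ + _); apply: eq_bigr => c _; rewrite sum_eq.
Qed.

Lemma handshake S : 3 * #|S| = 2 * #|inner_edges S| + #|boundary S|.
Proof.
rewrite -sum_ends_in !card_set_sum big_distrr -big_split /=; apply: eq_bigr => c _.
by case: (src c \in S); case: (tgt c \in S).
Qed.

Lemma card_incident_edges S : inner_edges S = set0 -> #|incident_edges S| = 3 * #|S|.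
Proof.
move=> /setP noinner; rewrite -sum_ends_in card_set_sum; apply: eq_bigr => c _.
by move: (noinner c); rewrite !inE; case: (src c \in S); case: (tgt c \in S).
Qed.

Lemma no_loop c : bridgeless src tgt -> src c != tgt c.
Proof.
move=> br; apply/negP => /eqP loop.
have := handshake [set src c]; have := boundary_neq1 [set src c] br.
have : 0 < #|inner_edges [set src c]| by apply/card_gt0P; exists c; rewrite !inE loop eqxx.
rewrite cards1; lia.
Qed.

Lemma colour_balance (col : V -> bool) e f : e != f ->
    (forall c, c != e -> c != f -> col (src c) != col (tgt c)) ->
  col (src e) + col (tgt e) + (col (src f) + col (tgt f)) = 2 /\
  #|[set v | col v]| = #|[set v | ~~ col v]|.
Proof.
move=> ef proper.
have := sum_ends_in [set v | col v]; have := sum_ends_in [set v | ~~ col v].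
rewrite !(sum_split2 _ ef) !inE.
rewrite [in X in _ -> X -> _](eq_bigr (fun c => col (src c) + col (tgt c)))
  => [|c _]; last by rewrite !inE.
rewrite (eq_bigr (fun c => col (src c) + col (tgt c))) => [|c /andP[ce cf]]; last first.
  by rewrite !inE; move: (proper c ce cf); case: (col (src c)); case: (col (tgt c)).
(* 3 #|col| - 3 #|~~ col| equals 2 (t e + t f) - 4, where t counts ends in col. *)
by case: (col (src e)); case: (col (tgt e)); case: (col (src f)); case: (col (tgt f));
  rewrite /=; lia.
Qed.

Lemma surplus_colouring (col : V -> bool) e f : e != f -> ~ bipartite src tgt ->
    (forall c, c != e -> c != f -> col (src c) != col (tgt c)) ->
  exists p : V -> bool, [/\ p (src e), p (tgt e), ~~ p (src f), ~~ p (tgt f) &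
    forall c, c != e -> c != f -> p (src c) != p (tgt c)].
Proof.
move=> ef nbip proper; have [balance _] := colour_balance ef proper.
have not_both : ~~ ((col (src e) != col (tgt e)) && (col (src f) != col (tgt f))).
  apply/negP => /andP[pe pf]; apply: nbip; exists col => c _.
  have [->//|ce] := eqVneq c e.
  by have [->//|cf] := eqVneq c f; apply: proper.
have [ete sfe tfe] : [/\ col (tgt e) = col (src e), col (src f) = ~~ col (src e)
    & col (tgt f) = ~~ col (src e)].
  move: balance not_both.
  by case: (col (src e)); case: (col (tgt e)); case: (col (src f)); case: (col (tgt f)).
exists (fun v => col v == col (src e)).
split=> [||||c ce cf] /=; rewrite ?ete ?sfe ?tfe ?eqxx //; try by case: (col (src e)).
by move: (proper c ce cf); case: (col (src c)); case: (col (tgt c)); case: (col (src e)).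
Qed.

End Cubic.

Section SurplusMatching.
Variables (p : V -> bool) (e f : E).
Hypotheses (cub : cubic src tgt) (br : bridgeless src tgt) (ef : e != f).
Hypotheses (pse : p (src e)) (pte : p (tgt e)) (psf : ~~ p (src f)) (ptf : ~~ p (tgt f)).
Hypothesis proper : forall c, c != e -> c != f -> p (src c) != p (tgt c).

Definition side_e := [set v | p v] :\: ends e.
Definition side_f := [set v | ~~ p v] :\: ends f.
Definition linked x y := (y \in side_f) && [exists c, [&& c != e, c != f & joins c x y]].

Lemma ends_e v : v \in ends e -> p v.
Proof. by rewrite !inE => /orP[]/eqP->. Qed.

Lemma ends_f v : v \in ends f -> ~~ p v.
Proof. by rewrite !inE => /orP[]/eqP->. Qed.

Lemma side_eE v : (v \in side_e) = (v \notin ends e) && p v.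
Proof. by rewrite in_setD inE. Qed.

Lemma side_fE v : (v \in side_f) = (v \notin ends f) && ~~ p v.
Proof. by rewrite in_setD inE. Qed.

Lemma edge_from_side_e c x y : x \in side_e -> joins c x y -> [&& c != e, c != f & ~~ p y].
Proof.
rewrite side_eE => /andP[xNe px] jc; have xc : x \in ends c by rewrite (joins_ends jc) set21.
have ce : c != e by apply: contraNneq xNe => <-.
have cf : c != f by apply: contraTneq px => ecf; apply: ends_f; rewrite -ecf.
rewrite ce cf; move: (proper ce cf).
by case/orP: jc => /andP[/eqP-> /eqP->]; rewrite px //; case: (p y).
Qed.

Lemma hall_condition_linked : hall_condition linked side_e.
Proof.
move=> X sXA; rewrite leqNgt; apply/negP => ltYX.
set Y := nbh linked X in ltYX *; set S := X :|: Y :|: ends f.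
have XA x : x \in X -> x \in side_e by apply: (subsetP sXA).
have XS x : x \in X -> x \in S by move=> xX; rewrite !in_setU xX.
have nbS c x y : x \in X -> joins c x y -> y \in S.
  move=> xX jc; have /and3P[ce cf py] := edge_from_side_e (XA x xX) jc.
  apply/setUP; have [|yNf] := boolP (y \in ends f); [by right|left].
  apply/setUP; right; apply/nbhP; exists x => //.
  by rewrite /linked side_fE py yNf; apply/existsP; exists c; rewrite ce cf jc.
have noinner : inner_edges X = set0.
  apply/setP => c; rewrite !inE; apply/negP => /andP[sX tX].
  have /and3P[_ _] := edge_from_side_e (XA _ sX) (joins_src_tgt c).
  by move: (XA _ tX); rewrite side_eE => /andP[_ ->].
have fNX : f \notin incident_edges X.
  rewrite inE; apply/norP; split; apply/negP => /XA.
    by rewrite side_eE (negbTE psf) andbF.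
  by rewrite side_eE (negbTE ptf) andbF.
have sub : f |: incident_edges X \subset inner_edges S.
  apply/subsetP => c; rewrite in_setU1 in_incident_edges in_inner_edges.
  case/orP=> [/eqP->|/orP[sX|tX]].
  - by apply/andP; split; apply/setUP; right; [exact: set21 | exact: set22].
  - by rewrite (XS _ sX) (nbS c _ _ sX (joins_src_tgt c)).
  - by rewrite (XS _ tX) (nbS c _ _ tX (joins_tgt_src c)).
have cardS : #|S| <= #|X| + #|Y| + 2.
  apply: leq_trans (leq_card_setU _ _).1 _; apply: leq_add; first exact: (leq_card_setU _ _).1.
  by rewrite cards2; case: (_ != _).
have := subset_leq_card sub; rewrite cardsU1 fNX card_incident_edges //.
have := handshake cub S; have := boundary_neq1 S br; lia.
Qed.

Lemma card_sides : #|side_e| = #|side_f|.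
Proof.
have [_ balance] := colour_balance cub ef proper.
have sub_e : ends e \subset [set v | p v] by apply/subsetP => v /ends_e; rewrite inE.
have sub_f : ends f \subset [set v | ~~ p v] by apply/subsetP => v /ends_f; rewrite inE.
by rewrite /side_e /side_f !cardsDS // balance !cards2 !no_loop.
Qed.

Lemma surplus_perfect_matching :
  exists M : {set E}, perfect_matching src tgt M /\ e \in M /\ f \in M.
Proof.
have [g [g_linked g_inj]] := hall_marriage (src e) hall_condition_linked.
have g_onto : g @: side_e = side_f.
  apply/eqP; rewrite eqEcard (card_in_imset g_inj) card_sides leqnn andbT.
  by apply/subsetP => _ /imsetP[x /g_linked /andP[gxB _] ->].
pose h x := odflt e [pick c | [&& c != e, c != f & joins c x (g x)]].
have h_joins x : x \in side_e -> joins (h x) x (g x).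
  move=> xA; rewrite /h; case: pickP => [c /and3P[_ _ //]|none].
  by have /andP[_ /existsP[c]] := g_linked x xA; rewrite none.
have disj_sides : [disjoint side_e & side_f].
  rewrite -setI_eq0; apply/eqP/setP => v; rewrite in_setI side_eE side_fE in_set0.
  by case: (p v); rewrite ?andbF.
have cover : covers_once ([set e] :|: [set f] :|: h @: side_e) [set: V].
  have -> : [set: V] = ends e :|: ends f :|: (side_e :|: side_f).
    apply/setP => v; rewrite in_setT (in_setU _ (ends e :|: ends f)).
    rewrite !(in_setU _ (ends _)) in_setU side_eE side_fE.
    by case: (p v); case: (v \in ends e); case: (v \in ends f).
  apply: covers_onceU; first apply: covers_onceU.
  - exact: covers_once_edge.
  - exact: covers_once_edge.
  - rewrite -setI_eq0; apply/eqP/setP => v; rewrite in_setI in_set0.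
    by apply/negP => /andP[/ends_e pv /ends_f]; rewrite pv.
  - exact: covers_once_imset disj_sides g_inj g_onto h_joins.
  - rewrite -setI_eq0; apply/eqP/setP => v; rewrite in_setI in_set0.
    rewrite (in_setU _ (ends e)) in_setU side_eE side_fE.
    move: (introT implyP (@ends_e v)) (introT implyP (@ends_f v)).
    by case: (v \in ends e); case: (v \in ends f); case: (p v).
exists ([set e] :|: [set f] :|: h @: side_e); split; last by rewrite !inE !eqxx ?orbT.
by split=> [c _|v]; [exact: no_loop | rewrite cover inE].
Qed.

End SurplusMatching.

End Multigraph.

Theorem proposition4p3 (V E : finType) (src tgt : E -> V) (e f : E) :
  almost_bipartite_with src tgt e f ->
  exists M : {set E}, perfect_matching src tgt M /\ e \in M /\ f \in M.
Proof.
case=> cub br nbip ef [col col_proper].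
have proper c : c != e -> c != f -> col (src c) != col (tgt c).
  by move=> ce cf; apply: col_proper; rewrite !inE negb_or ce cf.
have [p [pse pte psf ptf p_proper]] := surplus_colouring cub ef nbip proper.
exact: surplus_perfect_matching cub br ef pse pte psf ptf p_proper.
Qed.
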